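(* The logic $\mathsf{iCC}\oplus((p\wedge(p\mathrel{\Box\!\!\!\rightarrow} q))\to q)$ of intuitionistic cautious knowledge relative to information is sound and complete with respect to the class of cautious conditional frames that satisfy: if $x\in a$ then $x\in{\uparrow}R_a[x]$, for all worlds $x$ and upsets $a$.
   Context: Formulas: $\phi ::= p\mid\bot\mid\phi\wedge\phi\mid\phi\vee\phi\mid\phi\to\phi\mid\phi\mathrel{\Box\!\!\!\rightarrow}\phi$. $\mathsf{ICK}\oplus\Gamma$ is the smallest set containing intuitionistic propositional logic, $\Gamma$, $(p\mathrel{\Box\!\!\!\rightarrow}(q\wedge r))\leftrightarrow((p\mathrel{\Box\!\!\!\rightarrow} q)\wedge(p\mathrel{\Box\!\!\!\rightarrow} r))$ and $(p\mathrel{\Box\!\!\!\rightarrow}\top)\leftrightarrow\top$, closed under uniform substitution, modus ponens and congruence rules for both arguments of $\mathrel{\Box\!\!\!\rightarrow}$. $\mathsf{iCC}=\mathsf{ICK}\oplus(p\mathrel{\Box\!\!\!\rightarrow} p)\oplus(((p\mathrel{\Box\!\!\!\rightarrow} q)\wedge((p\wedge q)\mathrel{\Box\!\!\!\rightarrow} r))\to(p\mathrel{\Box\!\!\!\rightarrow} r))\oplus(((p\mathrel{\Box\!\!\!\rightarrow} q)\wedge(p\mathrel{\Box\!\!\!\rightarrow} r))\to((p\wedge q)\mathrel{\Box\!\!\!\rightarrow} r))$. A conditional frame is $(X,\leq,\mathcal{R})$, $(X,\leq)$ a nonempty preorder, $\mathcal{R}=\{R_a\mid a\text{ an upset}\}$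 with $(\leq\circ R_a)\subseteq(R_a\circ\leq)$; $x\models\phi\mathrel{\Box\!\!\!\rightarrow}\psi$ iff every $y$ with $xR_{V(\phi)}y$ satisfies $\psi$. A cautious conditional frame satisfies $R_a[x]\subseteq a$ and ($R_a[x]\subseteq b\subseteq a$ implies ${\uparrow}R_a[x]={\uparrow}R_b[x]$) for all $x$ and upsets $a,b$. *)

Set Implicit Arguments.

Inductive form : Type :=
| Var  : nat -> form
| Bot  : form
| And  : form -> form -> form
| Or   : form -> form -> form
| Imp  : form -> form -> form
| Cond : form -> form -> form.

Definition Top : form := Imp Bot Bot.
Definition Iff (a b : form) : form := And (Imp a b) (Imp b a).

Fixpoint subst (s : nat -> form) (f : form) : form :=
  match f with
  | Var n => s n
  | Bot => Bot
  | And a b => And (subst s a) (subst s b)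
  | Or a b => Or (subst s a) (subst s b)
  | Imp a b => Imp (subst s a) (subst s b)
  | Cond a b => Cond (subst s a) (subst s b)
  end.

Definition p : form := Var 0.
Definition q : form := Var 1.
Definition r : form := Var 2.

Inductive ipc_axiom : form -> Prop :=
| ipc_K   : ipc_axiom (Imp p (Imp q p))
| ipc_S   : ipc_axiom (Imp (Imp p (Imp q r)) (Imp (Imp p q) (Imp p r)))
| ipc_A1  : ipc_axiom (Imp (And p q) p)
| ipc_A2  : ipc_axiom (Imp (And p q) q)
| ipc_AI  : ipc_axiom (Imp p (Imp q (And p q)))
| ipc_O1  : ipc_axiom (Imp p (Or p q))
| ipc_O2  : ipc_axiom (Imp q (Or p q))
| ipc_OE  : ipc_axiom (Imp (Imp p r) (Imp (Imp q r) (Imp (Or p q) r)))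
| ipc_EFQ : ipc_axiom (Imp Bot p).

(** The extra axioms of iCK-with-cautious-knowledge:
    iCC = ICK + (p []-> p) + CM-type axioms, plus (p /\ (p []-> q)) -> q. *)
Inductive ick_axiom : form -> Prop :=
| ick_C  : ick_axiom (Iff (Cond p (And q r)) (And (Cond p q) (Cond p r)))
| ick_N  : ick_axiom (Iff (Cond p Top) Top).

Inductive icc_extra_axiom : form -> Prop :=
| icc_id   : icc_extra_axiom (Cond p p)
| icc_cut  : icc_extra_axiom
               (Imp (And (Cond p q) (Cond (And p q) r)) (Cond p r))
| icc_cm   : icc_extra_axiom
               (Imp (And (Cond p q) (Cond p r)) (Cond (And p q) r))
| icc_mp   : icc_extra_axiom (Imp (And p (Cond p q)) q).

Inductive thm : form -> Prop :=
| thm_ipc   : forall f, ipc_axiom f -> thm f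
| thm_ick   : forall f, ick_axiom f -> thm f
| thm_icc   : forall f, icc_extra_axiom f -> thm f
| thm_subst : forall s f, thm f -> thm (subst s f)
| thm_mp    : forall a b, thm (Imp a b) -> thm a -> thm b
| thm_congl : forall a b c, thm (Iff a b) -> thm (Iff (Cond a c) (Cond b c))
| thm_congr : forall a b c, thm (Iff a b) -> thm (Iff (Cond c a) (Cond c b)).

Definition upset {X : Type} (le : X -> X -> Prop) (a : X -> Prop) : Prop :=
  forall x y, le x y -> a x -> a y.

Definition up {X : Type} (le : X -> X -> Prop) (S : X -> Prop) : X -> Prop :=
  fun y => exists s, S s /\ le s y.

(** The family R is
    given as a function on all predicates, but only its values on upsets
    are ever constrained or used (V(phi) is always an upset). *)
Record cframe : Type := {
  world : Type;
  wle : world -> world -> Prop;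
  wR : (world -> Prop) -> world -> world -> Prop;
  world_nonempty : inhabited world;
  wle_refl : forall x, wle x x;
  wle_trans : forall x y z, wle x y -> wle y z -> wle x z;
  wR_coh : forall a, upset wle a ->
     forall x x' y', wle x x' -> wR a x' y' ->
     exists y, wR a x y /\ wle y y'
}.

Definition valuation (F : cframe) : Type := nat -> world F -> Prop.

Definition persistent_val (F : cframe) (V : valuation F) : Prop :=
  forall n, upset (@wle F) (V n).

Fixpoint sat (F : cframe) (V : valuation F) (x : world F) (f : form) : Prop :=
  match f with
  | Var n => V n x
  | Bot => False
  | And a b => sat V x a /\ sat V x b
  | Or a b => sat V x a \/ sat V x b
  | Imp a b => forall y, wle F x y -> sat V y a -> sat V y b
  | Cond a b => forall y, wR F (fun z => sat V z a) x y -> sat V y b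
  end.

Definition valid (F : cframe) (f : form) : Prop :=
  forall V : valuation F, persistent_val V -> forall x, sat V x f.

Definition cautious (F : cframe) : Prop :=
  (forall a x, upset (wle F) a ->
     forall y, wR F a x y -> a y) /\
  (forall a b x, upset (wle F) a -> upset (wle F) b ->
     (forall y, wR F a x y -> b y) ->
     (forall y, b y -> a y) ->
     forall z, up (wle F) (wR F a x) z <-> up (wle F) (wR F b x) z).

Definition reflexive_cond (F : cframe) : Prop :=
  forall a x, upset (wle F) a -> a x -> up (wle F) (wR F a x) x.

From Stdlib Require Import Classical FunctionalExtensionality PropExtensionality Lia Cantor.

(* Soundness is checked axiom by axiom: given p []-> q at x, the sets a = V(p)
   and b = V(p /\ q) satisfy R_a[x] <= b <= a, so cautiousness says that R_a[x]
   and R_b[x] have the same up-closure, which is exactly cut and cautious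
   monotonicity; (p /\ (p []-> q)) -> q is the reflexivity condition.

   Completeness uses the canonical frame of prime theories ordered by inclusion.
   Call phi a witness for a set a of prime theories at G when every prime theory
   containing the section G^phi = {psi | phi []-> psi in G} lies in a, and every
   member of a contains phi.  Put G R_a D iff D contains G^phi for a witness phi,
   or, when a has no witness at G, iff D is in a.  By cautious monotonicity and
   cut any two witnesses have the same section, so the choice of phi does not
   matter; phi []-> phi makes phi a witness for the truth set of phi, which gives
   the truth lemma, and the frame conditions hold by construction, reflexivity
   using (phi /\ (phi []-> psi)) -> psi. *)

Set Implicit Arguments.

Section Semantics.
Variable F : cframe.
Implicit Type V : valuation F.

Lemma up_upset_below (S c : world F -> Prop) :
  upset (wle F) c -> (forall y, S y -> c y) -> forall y, up (wle F) S y -> c y.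
Proof. intros hc hS y [s [hs hsy]]. exact (hc s y hsy (hS s hs)). Qed.

Lemma self_up (S : world F -> Prop) y : S y -> up (wle F) S y.
Proof. intros hy. exists y. split; [exact hy|apply wle_refl]. Qed.

Lemma cautious_cond_equiv a b c x :
  cautious F -> upset (wle F) a -> upset (wle F) b -> upset (wle F) c ->
  (forall y, wR F a x y -> b y) -> (forall y, b y -> a y) ->
  (forall y, wR F a x y -> c y) <-> (forall y, wR F b x y -> c y).
Proof.
  intros [_ hF] ha hb hc hab hba.
  split; intros h y hy; apply (up_upset_below hc h), (hF a b x ha hb hab hba y);
    apply self_up, hy.
Qed.

Lemma reflexive_cond_mp a c x :
  reflexive_cond F -> upset (wle F) a -> upset (wle F) c ->
  a x -> (forall y, wR F a x y -> c y) -> c x.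
Proof. intros hF ha hc hx h. exact (up_upset_below hc h (hF a x ha hx)). Qed.

Section Valuation.
Variable V : valuation F.
Hypothesis V_persistent : persistent_val V.

Lemma sat_upset f : upset (wle F) (fun x => sat V x f).
Proof.
  induction f as [n| |f IHf g IHg|f IHf g IHg|f _ g _|f IHf g IHg];
    intros x y hxy; simpl.
  - apply V_persistent, hxy.
  - trivial.
  - intros [hf hg]. split; [exact (IHf x y hxy hf)|exact (IHg x y hxy hg)].
  - intros [hf|hg]; [left; exact (IHf x y hxy hf)|right; exact (IHg x y hxy hg)].
  - intros h z hyz. apply h. exact (wle_trans F x y z hxy hyz).
  - intros h z hyz.
    destruct (wR_coh F IHf x y z hxy hyz) as [w [hxw hwz]].
    exact (IHg w z hwz (h w hxw)).
Qed.

Lemma sat_cond_cautious a b c x :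
  cautious F -> sat V x (Cond a b) ->
  sat V x (Cond a c) <-> sat V x (Cond (And a b) c).
Proof.
  intros hC hab. simpl.
  apply (cautious_cond_equiv x hC (sat_upset a) (sat_upset (And a b)) (sat_upset c)).
  - intros y hy. split; [exact (proj1 hC _ x (sat_upset a) y hy)|exact (hab y hy)].
  - intros y [hy _]; exact hy.
Qed.

End Valuation.

Lemma sat_subst V s f x :
  sat V x (subst s f) <-> sat (fun n y => sat V y (s n)) x f.
Proof.
  revert x; induction f as [n| |f IHf g IHg|f IHf g IHg|f IHf g IHg|f IHf g IHg];
    intros x; simpl.
  - reflexivity.
  - reflexivity.
  - rewrite IHf, IHg; reflexivity.
  - rewrite IHf, IHg; reflexivity.
  - setoid_rewrite IHf; setoid_rewrite IHg; reflexivity.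
  - assert (E : (fun z => sat V z (subst s f)) =
                (fun z => sat (fun n y => sat V y (s n)) z f)).
    { apply functional_extensionality; intros z.
      apply propositional_extensionality, IHf. }
    rewrite E. setoid_rewrite IHg. reflexivity.
Qed.

Lemma valid_mp a b : valid F (Imp a b) -> valid F a -> valid F b.
Proof.
  intros hab ha V hV x. exact (hab V hV x x (wle_refl F x) (ha V hV x)).
Qed.

Lemma valid_subst s f : valid F f -> valid F (subst s f).
Proof.
  intros hf V hV x. apply sat_subst, hf.
  intros n. exact (sat_upset hV (s n)).
Qed.

Lemma valid_iff_sat a b V :
  valid F (Iff a b) -> persistent_val V -> forall x, sat V x a <-> sat V x b.
Proof.
  intros hab hV x. destruct (hab V hV x) as [hl hr].
  split; [apply hl|apply hr]; apply wle_refl.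
Qed.

Lemma valid_congl a b c : valid F (Iff a b) -> valid F (Iff (Cond a c) (Cond b c)).
Proof.
  intros hab V hV x.
  assert (E : (fun z => sat V z a) = (fun z => sat V z b)).
  { apply functional_extensionality; intros z.
    apply propositional_extensionality, valid_iff_sat; assumption. }
  simpl. rewrite E. split; intros y _ h; exact h.
Qed.

Lemma valid_congr a b c : valid F (Iff a b) -> valid F (Iff (Cond c a) (Cond c b)).
Proof.
  intros hab V hV x. simpl.
  split; intros y _ h z hz; apply (valid_iff_sat hab hV), h, hz.
Qed.

Lemma ipc_axiom_valid f : ipc_axiom f -> valid F f.
Proof.
  assert (htrans := wle_trans F).
  intros [] V hV x; simpl; intros y hxy.
  - intros hp z hyz _. exact (hV 0 y z hyz hp).
  - intros hpqr z hyz hpq w hzw hp.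
    apply (hpqr w (htrans _ _ _ hyz hzw) hp w (wle_refl F w)), hpq; assumption.
  - intros [hp _]; exact hp.
  - intros [_ hq]; exact hq.
  - intros hp z hyz hq. split; [exact (hV 0 y z hyz hp)|exact hq].
  - intros hp; left; exact hp.
  - intros hq; right; exact hq.
  - intros hpr z hyz hqr w hzw [hp|hq].
    + exact (hpr w (htrans _ _ _ hyz hzw) hp).
    + exact (hqr w hzw hq).
  - intros [].
Qed.

Lemma ick_axiom_valid f : ick_axiom f -> valid F f.
Proof. intros [] V hV x; simpl; firstorder. Qed.

Lemma icc_extra_axiom_valid f :
  cautious F -> reflexive_cond F -> icc_extra_axiom f -> valid F f.
Proof.
  intros hC hR [] V hV x.
  - intros y. exact (proj1 hC _ x (sat_upset hV p) y).
  - intros y _ [hq hr]. apply (sat_cond_cautious hV r hC hq), hr.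
  - intros y _ [hq hr]. apply (sat_cond_cautious hV r hC hq), hr.
  - intros y _ [hp hq].
    exact (reflexive_cond_mp y hR (sat_upset hV p) (sat_upset hV q) hp hq).
Qed.

End Semantics.

Lemma soundness f :
  thm f -> forall F, cautious F -> reflexive_cond F -> valid F f.
Proof.
  intros hf F hC hR. induction hf.
  - apply ipc_axiom_valid; assumption.
  - apply ick_axiom_valid; assumption.
  - apply icc_extra_axiom_valid; assumption.
  - apply valid_subst; assumption.
  - eapply valid_mp; eassumption.
  - apply valid_congl; assumption.
  - apply valid_congr; assumption.
Qed.

Definition inst3 (A B C : form) : nat -> form :=
  fun n => match n with 0 => A | 1 => B | _ => C end.

Lemma thm_K A B : thm (Imp A (Imp B A)).
Proof. exact (thm_subst (inst3 A B Bot) (thm_ipc ipc_K)). Qed.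
Lemma thm_S A B C : thm (Imp (Imp A (Imp B C)) (Imp (Imp A B) (Imp A C))).
Proof. exact (thm_subst (inst3 A B C) (thm_ipc ipc_S)). Qed.
Lemma thm_andl A B : thm (Imp (And A B) A).
Proof. exact (thm_subst (inst3 A B Bot) (thm_ipc ipc_A1)). Qed.
Lemma thm_andr A B : thm (Imp (And A B) B).
Proof. exact (thm_subst (inst3 A B Bot) (thm_ipc ipc_A2)). Qed.
Lemma thm_andI A B : thm (Imp A (Imp B (And A B))).
Proof. exact (thm_subst (inst3 A B Bot) (thm_ipc ipc_AI)). Qed.
Lemma thm_orl A B : thm (Imp A (Or A B)).
Proof. exact (thm_subst (inst3 A B Bot) (thm_ipc ipc_O1)). Qed.
Lemma thm_orr A B : thm (Imp B (Or A B)).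
Proof. exact (thm_subst (inst3 A B Bot) (thm_ipc ipc_O2)). Qed.
Lemma thm_orE A B C : thm (Imp (Imp A C) (Imp (Imp B C) (Imp (Or A B) C))).
Proof. exact (thm_subst (inst3 A B C) (thm_ipc ipc_OE)). Qed.
Lemma thm_efq A : thm (Imp Bot A).
Proof. exact (thm_subst (inst3 A Bot Bot) (thm_ipc ipc_EFQ)). Qed.
Lemma thm_cond_and A B C : thm (Iff (Cond A (And B C)) (And (Cond A B) (Cond A C))).
Proof. exact (thm_subst (inst3 A B C) (thm_ick ick_C)). Qed.
Lemma thm_cond_top A : thm (Iff (Cond A Top) Top).
Proof. exact (thm_subst (inst3 A Bot Bot) (thm_ick ick_N)). Qed.
Lemma thm_cond_refl A : thm (Cond A A).
Proof. exact (thm_subst (inst3 A Bot Bot) (thm_icc icc_id)). Qed.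
Lemma thm_cut A B C : thm (Imp (And (Cond A B) (Cond (And A B) C)) (Cond A C)).
Proof. exact (thm_subst (inst3 A B C) (thm_icc icc_cut)). Qed.
Lemma thm_cm A B C : thm (Imp (And (Cond A B) (Cond A C)) (Cond (And A B) C)).
Proof. exact (thm_subst (inst3 A B C) (thm_icc icc_cm)). Qed.
Lemma thm_cond_mp A B : thm (Imp (And A (Cond A B)) B).
Proof. exact (thm_subst (inst3 A B Bot) (thm_icc icc_mp)). Qed.

Inductive deriv (G : form -> Prop) : form -> Prop :=
| deriv_thm f : thm f -> deriv G f
| deriv_hyp f : G f -> deriv G f
| deriv_mp a b : deriv G (Imp a b) -> deriv G a -> deriv G b.

Definition extend (G : form -> Prop) (a : form) : form -> Prop :=
  fun x => G x \/ x = a.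

Lemma deriv_mono (G H : form -> Prop) f :
  (forall x, G x -> H x) -> deriv G f -> deriv H f.
Proof.
  intros hGH. induction 1.
  - apply deriv_thm; assumption.
  - apply deriv_hyp, hGH; assumption.
  - eapply deriv_mp; eassumption.
Qed.

Lemma deriv_extended G a : deriv (extend G a) a.
Proof. apply deriv_hyp; right; reflexivity. Qed.

Lemma deriv_nil f : deriv (fun _ => False) f -> thm f.
Proof. induction 1; [assumption|contradiction|eapply thm_mp; eassumption]. Qed.

Lemma deriv_mp1 G A B : thm (Imp A B) -> deriv G A -> deriv G B.
Proof. intros h ha. exact (deriv_mp (deriv_thm G h) ha). Qed.

Lemma deriv_mp2 G A B C :
  thm (Imp A (Imp B C)) -> deriv G A -> deriv G B -> deriv G C.
Proof. intros h ha hb. exact (deriv_mp (deriv_mp1 h ha) hb). Qed.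

Lemma thm_imp_refl A : thm (Imp A A).
Proof. exact (thm_mp (thm_mp (thm_S A (Imp A A) A) (thm_K A (Imp A A))) (thm_K A A)). Qed.

Lemma deduction G a b : deriv (extend G a) b -> deriv G (Imp a b).
Proof.
  induction 1 as [f hf|f hf|f g _ IHfg _ IHf].
  - exact (deriv_mp1 (thm_K f a) (deriv_thm G hf)).
  - destruct hf as [hf| ->].
    + exact (deriv_mp1 (thm_K f a) (deriv_hyp G f hf)).
    + apply deriv_thm, thm_imp_refl.
  - exact (deriv_mp2 (thm_S a f g) IHfg IHf).
Qed.

Lemma thm_of_deriv a b : deriv (extend (fun _ => False) a) b -> thm (Imp a b).
Proof. intros h. apply deriv_nil, deduction, h. Qed.

Lemma thm_trans A B C : thm (Imp A B) -> thm (Imp B C) -> thm (Imp A C).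
Proof.
  intros hab hbc. apply thm_of_deriv.
  exact (deriv_mp1 hbc (deriv_mp1 hab (deriv_extended _ A))).
Qed.

Lemma thm_and_comm A B : thm (Imp (And A B) (And B A)).
Proof.
  apply thm_of_deriv.
  exact (deriv_mp2 (thm_andI B A) (deriv_mp1 (thm_andr A B) (deriv_extended _ _))
           (deriv_mp1 (thm_andl A B) (deriv_extended _ _))).
Qed.

Lemma thm_iff_intro A B : thm (Imp A B) -> thm (Imp B A) -> thm (Iff A B).
Proof. intros hab hba. exact (thm_mp (thm_mp (thm_andI _ _) hab) hba). Qed.

Lemma cond_mono A B C : thm (Imp B C) -> thm (Imp (Cond A B) (Cond A C)).
Proof.
  intros hbc.
  assert (hB : thm (Iff B (And B C))).
  { apply thm_iff_intro; [|apply thm_andl]. apply thm_of_deriv.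
    exact (deriv_mp2 (thm_andI B C) (deriv_extended _ _)
             (deriv_mp1 hbc (deriv_extended _ _))). }
  apply (thm_trans (thm_mp (thm_andl _ _) (thm_congr A hB))).
  exact (thm_trans (thm_mp (thm_andl _ _) (thm_cond_and A B C)) (thm_andr _ _)).
Qed.

Lemma cond_necessitation A B : thm B -> thm (Cond A B).
Proof.
  intros hB. refine (thm_mp (cond_mono A (thm_mp (thm_K B Top) hB)) _).
  exact (thm_mp (thm_mp (thm_andr _ _) (thm_cond_top A)) (thm_imp_refl Bot)).
Qed.

Definition closed (G : form -> Prop) : Prop := forall f, deriv G f -> G f.

Lemma closed_mp1 {G A B} : closed G -> thm (Imp A B) -> G A -> G B.
Proof. intros hG h ha. exact (hG B (deriv_mp1 h (deriv_hyp G A ha))). Qed.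

Lemma closed_mp2 {G A B C} : closed G -> thm (Imp A (Imp B C)) -> G A -> G B -> G C.
Proof.
  intros hG h ha hb. exact (hG C (deriv_mp2 h (deriv_hyp G A ha) (deriv_hyp G B hb))).
Qed.

Lemma closed_and {G A B} : closed G -> G A -> G B -> G (And A B).
Proof. intros hG. apply closed_mp2, thm_andI; assumption. Qed.

Definition cond_section (G : form -> Prop) (phi : form) : form -> Prop :=
  fun x => G (Cond phi x).

Lemma cond_section_closed G phi :
  closed G -> closed (cond_section G phi).
Proof.
  intros hG psi. induction 1 as [f hf|f hf|a b _ IHab _ IHa].
  - apply hG, deriv_thm, cond_necessitation, hf.
  - exact hf.
  - assert (hand : G (Cond phi (And (Imp a b) a))).
    { apply (closed_mp1 hG (thm_mp (thm_andr _ _) (thm_cond_and _ _ _))), closed_and;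
      assumption. }
    refine (closed_mp1 hG (cond_mono phi _) hand).
    apply thm_of_deriv.
    exact (deriv_mp (deriv_mp1 (thm_andl _ _) (deriv_extended _ _))
                    (deriv_mp1 (thm_andr _ _) (deriv_extended _ _))).
Qed.

Lemma cond_antecedent_equiv {G A B C} :
  closed G -> G (Cond A B) -> G (Cond B A) -> G (Cond A C) -> G (Cond B C).
Proof.
  intros hG hab hba hac.
  assert (hABC : G (Cond (And A B) C)).
  { apply (closed_mp1 hG (thm_cm A B C)), closed_and; assumption. }
  assert (hBAC : G (Cond (And B A) C)).
  { refine (closed_mp1 hG (thm_mp (thm_andl _ _) (thm_congl C _)) hABC).
    apply thm_iff_intro; apply thm_and_comm. }
  apply (closed_mp1 hG (thm_cut B A C)), closed_and; assumption.
Qed.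

Record ptheory : Type := {
  pt :> form -> Prop;
  pt_closed : closed pt;
  pt_consistent : ~ pt Bot;
  pt_prime : forall a b, pt (Or a b) -> pt a \/ pt b
}.

Lemma ptheory_and (G : ptheory) a b : G (And a b) <-> G a /\ G b.
Proof.
  split.
  - intros h. split; [exact (closed_mp1 (pt_closed G) (thm_andl a b) h)
                     |exact (closed_mp1 (pt_closed G) (thm_andr a b) h)].
  - intros [ha hb]. exact (closed_and (pt_closed G) ha hb).
Qed.

Lemma ptheory_or (G : ptheory) a b : G (Or a b) <-> G a \/ G b.
Proof.
  split; [apply pt_prime|].
  intros [ha|hb]; [exact (closed_mp1 (pt_closed G) (thm_orl a b) ha)
                  |exact (closed_mp1 (pt_closed G) (thm_orr a b) hb)].
Qed.

Fixpoint depth (f : form) : nat :=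
  match f with
  | Var _ | Bot => 1
  | And a b | Or a b | Imp a b | Cond a b => S (Nat.max (depth a) (depth b))
  end.

Fixpoint encode (f : form) : nat :=
  match f with
  | Var n => Cantor.to_nat (0, n)
  | Bot => Cantor.to_nat (1, 0)
  | And a b => Cantor.to_nat (2, Cantor.to_nat (encode a, encode b))
  | Or a b => Cantor.to_nat (3, Cantor.to_nat (encode a, encode b))
  | Imp a b => Cantor.to_nat (4, Cantor.to_nat (encode a, encode b))
  | Cond a b => Cantor.to_nat (5, Cantor.to_nat (encode a, encode b))
  end.

Fixpoint decode (k n : nat) : form :=
  match k with
  | 0 => Bot
  | S k =>
    let '(t, m) := Cantor.of_nat n in
    let '(a, b) := Cantor.of_nat m in
    match t with
    | 0 => Var m
    | 1 => Bot
    | 2 => And (decode k a) (decode k b)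
    | 3 => Or (decode k a) (decode k b)
    | 4 => Imp (decode k a) (decode k b)
    | _ => Cond (decode k a) (decode k b)
    end
  end.

Lemma decode_encode f k : depth f <= k -> decode k (encode f) = f.
Proof.
  revert k; induction f; intros k hk; destruct k as [|k]; simpl in hk; try lia;
    cbn [decode encode]; rewrite !Cantor.cancel_of_to; cbv beta iota;
    try (rewrite IHf1, IHf2 by lia; reflexivity).
  - destruct (Cantor.of_nat n); reflexivity.
  - reflexivity.
Qed.

Definition form_of_nat (m : nat) : form :=
  let '(k, n) := Cantor.of_nat m in decode k n.

Lemma form_of_nat_surj f : exists m, form_of_nat m = f.
Proof.
  exists (Cantor.to_nat (depth f, encode f)). unfold form_of_nat.
  rewrite Cantor.cancel_of_to. apply decode_encode. reflexivity.
Qed.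

Section Lindenbaum.
Variables (G : form -> Prop) (psi : form).
Hypothesis G_underivable : ~ deriv G psi.

Fixpoint stage (n : nat) : form -> Prop :=
  match n with
  | 0 => G
  | S n => fun x => stage n x \/
             (x = form_of_nat n /\ ~ deriv (extend (stage n) (form_of_nat n)) psi)
  end.

Definition limit : form -> Prop := fun x => exists n, stage n x.

Lemma stage_mono n m : n <= m -> forall x, stage n x -> stage m x.
Proof. induction 1; simpl; auto. Qed.

Lemma deriv_limit_stage f : deriv limit f -> exists n, deriv (stage n) f.
Proof.
  induction 1 as [f hf|f [n hn]|a b _ [n1 h1] _ [n2 h2]].
  - exists 0. apply deriv_thm, hf.
  - exists n. apply deriv_hyp, hn.
  - exists (Nat.max n1 n2). eapply deriv_mp.
    + eapply deriv_mono; [|exact h1]. apply stage_mono; lia.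
    + eapply deriv_mono; [|exact h2]. apply stage_mono; lia.
Qed.

Lemma stage_underivable n : ~ deriv (stage n) psi.
Proof.
  induction n as [|n IHn]; [exact G_underivable|]. simpl.
  destruct (classic (deriv (extend (stage n) (form_of_nat n)) psi)) as [h|h];
    intros hn; [apply IHn|apply h]; refine (deriv_mono _ _ hn); unfold extend; tauto.
Qed.

Lemma limit_underivable : ~ deriv limit psi.
Proof. intros h. destruct (deriv_limit_stage h) as [n hn]. exact (stage_underivable n hn). Qed.

Lemma limit_maximal f : ~ limit f -> deriv (extend limit f) psi.
Proof.
  intros hf. destruct (form_of_nat_surj f) as [n <-].
  apply NNPP; intros hn. apply hf. exists (S n). right. split; [reflexivity|].
  intros h. apply hn. refine (deriv_mono _ _ h).
  intros x [hx|hx]; [left; exists n; exact hx|right; exact hx].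
Qed.

Lemma limit_closed : closed limit.
Proof.
  intros f h. apply NNPP; intros hf. apply limit_underivable.
  exact (deriv_mp (deduction (limit_maximal hf)) h).
Qed.

Lemma limit_consistent : ~ limit Bot.
Proof. intros h. apply limit_underivable, (deriv_mp1 (thm_efq psi)), deriv_hyp, h. Qed.

Lemma limit_prime a b : limit (Or a b) -> limit a \/ limit b.
Proof.
  intros h. apply NNPP; intros hab. apply limit_underivable.
  refine (deriv_mp (deriv_mp2 (thm_orE a b psi) _ _) (deriv_hyp _ _ h));
    apply deduction, limit_maximal; tauto.
Qed.

End Lindenbaum.

Lemma lindenbaum G psi :
  ~ deriv G psi -> exists D : ptheory, (forall x, G x -> D x) /\ ~ D psi.
Proof.
  intros h. exists (Build_ptheory (limit_closed h) (limit_consistent h) (limit_prime h)).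
  split; simpl.
  - intros x hx. exists 0. exact hx.
  - intros hpsi. apply (limit_underivable h), deriv_hyp, hpsi.
Qed.

Definition pt_sub (G D : ptheory) : Prop := forall x, G x -> D x.

Lemma pt_sub_refl G : pt_sub G G.
Proof. intros x hx; exact hx. Qed.

Lemma pt_sub_trans G H K : pt_sub G H -> pt_sub H K -> pt_sub G K.
Proof. intros hGH hHK x hx. exact (hHK x (hGH x hx)). Qed.

Definition section_sub (phi : form) (G D : ptheory) : Prop :=
  forall x, G (Cond phi x) -> D x.

Definition witness (a : ptheory -> Prop) (G : ptheory) (phi : form) : Prop :=
  (forall D, section_sub phi G D -> a D) /\ (forall D, a D -> D phi).

Definition canR (a : ptheory -> Prop) (G D : ptheory) : Prop :=
  (exists phi, witness a G phi /\ section_sub phi G D) \/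
  ((~ exists phi, witness a G phi) /\ a D).

Lemma ptheory_imp (G : ptheory) a b :
  (forall D : ptheory, pt_sub G D -> D a -> D b) <-> G (Imp a b).
Proof.
  split.
  - intros h. apply NNPP; intros hab.
    destruct (@lindenbaum (extend G a) b) as [D [hGD hb]].
    { intros hd. apply hab, pt_closed, deduction, hd. }
    apply hb, h; [intros x hx; apply hGD; left; exact hx|apply hGD; right; reflexivity].
  - intros hab D hGD ha.
    exact (pt_closed D (deriv_mp (deriv_hyp D _ (hGD _ hab)) (deriv_hyp D a ha))).
Qed.

Lemma ptheory_cond (G : ptheory) phi chi :
  (forall D : ptheory, section_sub phi G D -> D chi) <-> G (Cond phi chi).
Proof.
  split.
  - intros h. apply NNPP; intros hchi.
    destruct (@lindenbaum (cond_section G phi) chi) as [D [hGD hD]].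
    { intros hd. exact (hchi (cond_section_closed (phi := phi) (pt_closed G) hd)). }
    exact (hD (h D hGD)).
  - intros hchi D hD. exact (hD chi hchi).
Qed.

Lemma witness_section_sub a G phi psi :
  witness a G phi -> witness a G psi -> forall D, section_sub psi G D -> section_sub phi G D.
Proof.
  intros [hphi_a ha_phi] [hpsi_a ha_psi] D hD x hx.
  assert (hphi_psi : G (Cond phi psi)) by (apply ptheory_cond; auto).
  assert (hpsi_phi : G (Cond psi phi)) by (apply ptheory_cond; auto).
  exact (hD x (cond_antecedent_equiv (pt_closed G) hphi_psi hpsi_phi hx)).
Qed.

Lemma canR_witness a G phi :
  witness a G phi -> forall D, canR a G D <-> section_sub phi G D.
Proof.
  intros hw D. split.
  - intros [[psi [hpsi hD]]|[hn _]].
    + exact (witness_section_sub hw hpsi hD).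
    + exfalso. apply hn. exists phi. exact hw.
  - intros hD. left. exists phi. split; assumption.
Qed.

Lemma canR_sub a G D : canR a G D -> a D.
Proof. intros [[phi [[hphi _] hD]]|[_ hD]]; auto. Qed.

Lemma witness_pt_sub a G G' phi : pt_sub G G' -> witness a G phi -> witness a G' phi.
Proof.
  intros hGG' [hphi_a ha_phi]. split; [|exact ha_phi].
  intros D hD. apply hphi_a. intros x hx. apply hD, hGG', hx.
Qed.

Lemma canR_coh a (x x' y' : ptheory) :
  pt_sub x x' -> canR a x' y' -> exists y, canR a x y /\ pt_sub y y'.
Proof.
  intros hxx' hy'. exists y'. split; [|apply pt_sub_refl].
  destruct (classic (exists phi, witness a x phi)) as [[phi hw]|hn].
  - apply (canR_witness hw). intros z hz.
    apply (proj1 (canR_witness (witness_pt_sub hxx' hw) y') hy'), hxx', hz.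
  - right. split; [exact hn|exact (canR_sub hy')].
Qed.

Lemma canR_cautious {a b G} :
  (forall D, canR a G D -> b D) -> (forall D, b D -> a D) ->
  forall D, canR a G D <-> canR b G D.
Proof.
  intros hab hba.
  destruct (classic (exists phi, witness a G phi)) as [[phi hw]|hn].
  - assert (hwb : witness b G phi).
    { split.
      - intros D hD. apply hab, (canR_witness hw), hD.
      - intros D hD. apply (proj2 hw), hba, hD. }
    intros D. rewrite (canR_witness hw), (canR_witness hwb). reflexivity.
  - assert (hnb : ~ exists phi, witness b G phi).
    { intros [phi [hphi_b hb_phi]]. apply hn. exists phi. split.
      - intros D hD. apply hba, hphi_b, hD.
      - intros D hD. apply hb_phi, hab. right. split; assumption. }
    intros D. split.
    + intros hD. right. split; [exact hnb|exact (hab D hD)].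
    + intros hD. right. split; [exact hn|exact (hba D (canR_sub hD))].
Qed.

Lemma canR_reflexive {a} {G : ptheory} : a G -> canR a G G.
Proof.
  intros hG.
  destruct (classic (exists phi, witness a G phi)) as [[phi hw]|hn].
  - apply (canR_witness hw). intros x hx.
    exact (closed_mp1 (pt_closed G) (thm_cond_mp phi x)
             (closed_and (pt_closed G) (proj2 hw G hG) hx)).
  - right. split; assumption.
Qed.

Definition canonical_frame (h : inhabited ptheory) : cframe :=
  {| world := ptheory; wle := pt_sub; wR := canR; world_nonempty := h;
     wle_refl := pt_sub_refl; wle_trans := pt_sub_trans;
     wR_coh := fun a _ => @canR_coh a |}.

Section CanonicalModel.
Variable h : inhabited ptheory.

Definition canonical_val : valuation (canonical_frame h) := fun n G => G (Var n).

Lemma canonical_val_persistent : persistent_val canonical_val.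
Proof. intros n G D hGD hG. exact (hGD _ hG). Qed.

Lemma truth_lemma f : forall G : ptheory, sat canonical_val G f <-> G f.
Proof.
  induction f as [n| |a IHa b IHb|a IHa b IHb|a IHa b IHb|a IHa b IHb];
    intros G; simpl.
  - reflexivity.
  - split; [contradiction|apply pt_consistent].
  - rewrite IHa, IHb. symmetry. apply ptheory_and.
  - rewrite IHa, IHb. symmetry. apply ptheory_or.
  - setoid_rewrite IHa. setoid_rewrite IHb. apply ptheory_imp.
  - assert (hw : witness (fun D => sat canonical_val D a) G a).
    { split; intros D hD; apply IHa; [|exact hD].
      apply hD, (pt_closed G), deriv_thm, thm_cond_refl. }
    setoid_rewrite (canR_witness hw). setoid_rewrite IHb. apply ptheory_cond.
Qed.

Lemma canonical_cautious : cautious (canonical_frame h).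
Proof.
  split.
  - intros a G _ D hD. exact (canR_sub hD).
  - intros a b G _ _ hab hba D. simpl.
    split; intros [E [hE hED]]; exists E; split; try exact hED;
      apply (canR_cautious hab hba E), hE.
Qed.

Lemma canonical_reflexive : reflexive_cond (canonical_frame h).
Proof.
  intros a G _ hG. exists G. split; [exact (canR_reflexive hG)|apply pt_sub_refl].
Qed.

End CanonicalModel.

Lemma completeness f :
  (forall F, cautious F -> reflexive_cond F -> valid F f) -> thm f.
Proof.
  intros hf. apply NNPP; intros hnf.
  destruct (@lindenbaum (fun _ => False) f) as [G [_ hG]].
  { intros hd. apply hnf, deriv_nil, hd. }
  apply hG, (truth_lemma (inhabits G)), hf.
  - apply canonical_cautious.
  - apply canonical_reflexive.
  - apply canonical_val_persistent.
Qed.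

Theorem theorem6p10 : forall f : form,
  thm f <-> (forall F : cframe, cautious F -> reflexive_cond F -> valid F f).
Proof.
  intros f. split; [apply soundness|apply completeness].
Qed.
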